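(* $$S^{(0)}(x,t,c,\eta)-S^{(0)}(x,t,c-\eta^{-1},\eta)=-\frac{\partial}{\partial x}\log\Big(f^{(0)}(x,t,c,\eta)+g^{(0)}(x,t,c,\eta)\,S^{(0)}(x,t,c,\eta)\Big),$$ where $S^{(0)}(x,t,c-\eta^{-1},\eta)$ is the corresponding formal Riccati solution built from the 0-parameter solution with parameter $c-\eta^{-1}$ (re-expanded in $\eta^{-1}$).
   Context: Let $\eta$ be a large parameter, $c\neq0$. Let $\lambda_0$ be a branch of $2\lambda_0^3+t\lambda_0+c=0$ and $(\lambda^{(0)},\nu^{(0)})$ the 0-parameter solution of $(H_{\rm II})$: $\frac{d\lambda}{dt}=\eta\nu$, $\frac{d\nu}{dt}=\eta(2\lambda^3+t\lambda+c)$ (the formal power series solution in $\eta^{-1}$ with leading terms $\lambda_0,0$). Let $Q^{(0)}_{\rm II}=x^4+tx^2+2cx+(\nu^{(0)})^2-((\lambda^{(0)})^4+t(\lambda^{(0)})^2+2c\lambda^{(0)})-\eta^{-1}\frac{\nu^{(0)}}{x-\lambda^{(0)}}+\eta^{-2}\frac{3}{4(x-\lambda^{(0)})^2}$ with leading term $Q_0=(x-\lambda_0)^2(x^2+2\lambda_0x+3\lambda_0^2+t)$, and $S^{(0)}$ the formal solution of $S^2+\partial_xS=\eta^2Q^{(0)}_{\rm II}$ with leading term $\eta\sqrt{Q_0}$ (fixed branch). Let $\Lambda(\lambda,\nu)=-\lambda+\frac{c-\frac12\eta^{-1}}{\nu-\lambda^2-\frac12t}$ (Bäcklund transformation). Define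 $f=(x-\Lambda(\lambda,\nu))^{-1/2}(x-\lambda)^{-1/2}\big\{x^2-\lambda^2+\nu-\eta^{-1}\frac{1}{2(x-\lambda)}\big\}$ and $g=-\eta^{-1}(x-\Lambda(\lambda,\nu))^{-1/2}(x-\lambda)^{-1/2}$, and let $f^{(0)},g^{(0)}$ be the formal power series in $\eta^{-1}$ obtained by substituting $(\lambda,\nu)=(\lambda^{(0)},\nu^{(0)})$ (the common branch of the square root factor is irrelevant). *)

(* Formal power series in eta^{-1} with coefficients in a
   differential field K (a field of functions of x, t, c with the partial
   derivatives d/dx, d/dt, d/dc).  A series is a map  nat -> K :
   F = \sum_n F n * eta^{-n}. *)
From HB Require Import structures.
From mathcomp Require Import all_boot all_order all_algebra.
Set Implicit Arguments. Unset Strict Implicit. Unset Printing Implicit Defensive.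
Import Order.TTheory GRing.Theory Num.Theory.
Local Open Scope ring_scope.

Section Series.
Variable K : fieldType.

Definition ser := nat -> K.

Definition sconst (a : K) : ser := fun n => if n is 0 then a else 0.
Definition sX : ser := fun n => if n == 1%N then 1 else 0.
Definition sadd (f g : ser) : ser := fun n => f n + g n.
Definition sopp (f : ser) : ser := fun n => - f n.
Definition ssub (f g : ser) : ser := fun n => f n - g n.
Definition smul (f g : ser) : ser :=
  fun n => \sum_(i < n.+1) f i * g (n - i)%N.
Definition spow (f : ser) (k : nat) : ser := iter k (smul f) (sconst 1).
Definition smap (d : K -> K) (f : ser) : ser := fun n => d (f n).

Fixpoint sinv_seq (f : ser) (n : nat) : seq K :=
  match n with
  | 0 => [:: (f 0%N)^-1]
  | n'.+1 => let l := sinv_seq f n' in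
      rcons l (- (f 0%N)^-1 * \sum_(i < n'.+1) f i.+1 * nth 0 l (n' - i)%N)
  end.
Definition sinv (f : ser) : ser := fun n => nth 0 (sinv_seq f n) n.

(* Re-expansion in eta^{-1} of F(x,t,c - eta^{-1}, eta) (Taylor expansion in c):
   F(c - eta^{-1}) = \sum_j (-eta^{-1})^j / j! * (d/dc)^j F(c). *)
Definition cshift (dc : K -> K) (f : ser) : ser :=
  fun n => \sum_(j < n.+1)
     ((-1) ^+ j / (j`!)%:R) * iter j dc (f (n - j)%N).

Definition half : K := (2%:R)^-1.

Definition QII (x t c : K) (lam nu : ser) : ser :=
  let xl := sinv (ssub (sconst x) lam) in
  sadd (sconst (x ^+ 4 + t * x ^+ 2 + 2%:R * c * x))
  (sadd (spow nu 2)
  (sadd (sopp (sadd (spow lam 4)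
               (sadd (smul (sconst t) (spow lam 2))
                     (smul (sconst (2%:R * c)) lam))))
  (sadd (sopp (smul sX (smul nu xl)))
        (smul (spow sX 2) (smul (sconst (3%:R / 4%:R)) (spow xl 2)))))).

Definition BLam (t c : K) (lam nu : ser) : ser :=
  sadd (sopp lam)
    (smul (ssub (sconst c) (smul sX (sconst half)))
          (sinv (ssub (ssub nu (spow lam 2)) (sconst (half * t))))).

(* f without the square-root prefactor:
   x^2 - lam^2 + nu - eta^{-1} / (2 (x - lam)) *)
Definition fcore (x : K) (lam nu : ser) : ser :=
  sadd (ssub (sconst (x ^+ 2)) (spow lam 2))
    (ssub nu (smul sX (smul (sconst half) (sinv (ssub (sconst x) lam))))).

End Series.
Arguments sX {K}.
Arguments half {K}.

From Pilot Require Import Defs.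
From HB Require Import structures.
From mathcomp Require Import all_boot all_order all_algebra.
From mathcomp Require Import boolp.
From mathcomp Require Import ring.
Import GRing.Theory.
Local Open Scope ring_scope.
Set Implicit Arguments. Unset Strict Implicit. Unset Printing Implicit Defensive.

(* Write e = eta^{-1}, q = e/2, S^(0) = eta s, and let sg be
   the re-expansion F(c) |-> F(c - e).
   1. Series over K form a commutative ring (associativity via truncation to
      polynomials); sinv is the ring inverse, and coefficientwise derivations
      are derivations of that ring.
   2. sg is a ring morphism that commutes with sinv and with every derivation
      commuting with d/dc; it fixes c-independent constants and sends c to c - e.
   3. A triangular uniqueness principle: if dl * U = e * G with U invertible
      and the n-th coefficient of G determined by dl up to order n (and zero
      when dl is), then dl = 0.
   4. The Baecklund transform (Lam, nut) of (lam, nu) solves (H_II) with c - e;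
      so does (sg lam, sg nu), hence they coincide by uniqueness (3).
   5. With G = x^2 - lam^2 + nu - q/(x-lam) - s, the gauge transform
      s - q (1/(x-lam) + 1/(x-Lam)) + e G'/G solves the shifted Riccati
      equation (a polynomial identity); so does sg s, hence they coincide.
   6. Since the prefactor r of f^(0) and g^(0) satisfies r^2 (x-Lam)(x-lam) = 1,
      the logarithmic derivative of F = r G gives the theorem. *)

Section SeriesRing.
Variable K : fieldType.
Local Notation S := (ser K).

Lemma ser_ext (f g : S) : (forall n, f n = g n) -> f = g.
Proof. by move=> H; apply: funext. Qed.

HB.instance Definition _ := Choice.copy S (nat -> K).

Lemma saddA : associative (@sadd K).
Proof. by move=> f g h; apply: ser_ext => n; rewrite /sadd addrA. Qed.
Lemma saddC : commutative (@sadd K).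
Proof. by move=> f g; apply: ser_ext => n; rewrite /sadd addrC. Qed.
Lemma sadd0 : left_id (sconst 0) (@sadd K).
Proof. by move=> f; apply: ser_ext => -[|n]; rewrite /sadd /sconst add0r. Qed.
Lemma saddN : left_inverse (sconst 0) (@sopp K) (@sadd K).
Proof. by move=> f; apply: ser_ext => -[|n]; rewrite /sadd /sopp /sconst addNr. Qed.

HB.instance Definition _ := GRing.isZmodule.Build S saddA saddC sadd0 saddN.

(* The truncation of a series at order n; the n-th coefficient of a Cauchy
   product only depends on the truncations, which reduces the ring laws of
   series to those of polynomials. *)
Definition trunc (n : nat) (f : S) : {poly K} := \poly_(i < n.+1) f i.

Lemma coef_trunc n f i : (i <= n)%N -> (trunc n f)`_i = f i.
Proof. by move=> Hi; rewrite /trunc coef_poly ltnS Hi. Qed.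

Lemma coefM_agree (p p' q q' : {poly K}) n :
  (forall i, (i <= n)%N -> p`_i = p'`_i) -> (forall i, (i <= n)%N -> q`_i = q'`_i) ->
  (p * q)`_n = (p' * q')`_n.
Proof.
move=> Hp Hq; rewrite !coefM; apply: eq_bigr => i _.
by rewrite Hp ?Hq ?leq_subr // -ltnS.
Qed.

Lemma smul_trunc (f g : S) n : smul f g n = (trunc n f * trunc n g)`_n.
Proof.
rewrite /smul coefM; apply: eq_bigr => i _.
by rewrite !coef_trunc ?leq_subr // -ltnS.
Qed.

Lemma trunc_smul (f g : S) n i :
  (i <= n)%N -> (trunc n (smul f g))`_i = (trunc n f * trunc n g)`_i.
Proof.
move=> Hi; rewrite coef_trunc // smul_trunc; apply: coefM_agree => j Hj;
  by rewrite !coef_trunc // (leq_trans Hj Hi).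
Qed.

Lemma smulA : associative (@smul K).
Proof.
move=> f g h; apply: ser_ext => n.
rewrite (smul_trunc (smul f g)) (smul_trunc f (smul g h)).
rewrite (@coefM_agree _ (trunc n f * trunc n g) _ (trunc n h) _
  (fun i Hi => trunc_smul f g Hi) (fun i _ => erefl)).
rewrite (@coefM_agree (trunc n f) (trunc n f) _ (trunc n g * trunc n h) _
  (fun i _ => erefl) (fun i Hi => trunc_smul g h Hi)).
by rewrite mulrA.
Qed.

Lemma smulC : commutative (@smul K).
Proof. by move=> f g; apply: ser_ext => n; rewrite !smul_trunc mulrC. Qed.

Lemma smul1 : left_id (sconst 1) (@smul K).
Proof.
move=> f; apply: ser_ext => n; rewrite /smul big_ord_recl /= subn0 mul1r.
by rewrite big1 ?addr0 // => i _; rewrite /sconst /= mul0r.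
Qed.

Lemma smulDl : left_distributive (@smul K) (@sadd K).
Proof.
move=> f g h; apply: ser_ext => n; rewrite /smul /sadd -big_split /=.
by apply: eq_bigr => i _; rewrite mulrDl.
Qed.

Lemma sconst1_neq0 : sconst (1 : K) != sconst 0.
Proof.
apply/negP => /eqP /(congr1 (fun f => f 0%N)) /eqP.
by rewrite /sconst /= oner_eq0.
Qed.

HB.instance Definition _ :=
  GRing.Zmodule_isComNzRing.Build S smulA smulC smul1 smulDl sconst1_neq0.

Lemma saddE (f g : S) : sadd f g = f + g. Proof. by []. Qed.
Lemma smulE (f g : S) : smul f g = f * g. Proof. by []. Qed.
Lemma soppE (f : S) : sopp f = - f. Proof. by []. Qed.
Lemma ssubE (f g : S) : ssub f g = f - g. Proof. by []. Qed.
Lemma sconst0 : sconst (0 : K) = 0. Proof. by []. Qed.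
Lemma sconst1 : sconst (1 : K) = 1. Proof. by []. Qed.
Lemma spowE (f : S) k : spow f k = f ^+ k.
Proof. by elim: k => [|k IH] //; rewrite /spow /= -/(spow f k) IH exprS. Qed.

Lemma addsE (f g : S) n : (f + g) n = f n + g n. Proof. by []. Qed.
Lemma oppsE (f : S) n : (- f) n = - f n. Proof. by []. Qed.
Lemma subsE (f g : S) n : (f - g) n = f n - g n. Proof. by []. Qed.
Lemma mulsE (f g : S) n : (f * g) n = \sum_(i < n.+1) f i * g (n - i)%N.
Proof. by []. Qed.
Lemma zerosE n : (0 : S) n = 0. Proof. by case: n. Qed.

End SeriesRing.

Section SeriesCoefficients.
Variable K : fieldType.
Local Notation S := (ser K).

Lemma sconstE (a : K) n : sconst a n = if n is 0 then a else 0. Proof. by []. Qed.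

Lemma mulCs (a : K) (f : S) n : (sconst a * f) n = a * f n.
Proof. by rewrite mulsE big_ord_recl /= subn0 big1 ?addr0 // => i _; rewrite mul0r. Qed.

Lemma sconstD (a b : K) : sconst (a + b) = sconst a + sconst b.
Proof. by apply: ser_ext => -[|n]; rewrite addsE !sconstE ?addr0. Qed.
Lemma sconstM (a b : K) : sconst (a * b) = sconst a * sconst b.
Proof. by apply: ser_ext => -[|n]; rewrite mulCs !sconstE ?mulr0. Qed.
Lemma sconstn (n : nat) : sconst (n%:R : K) = n%:R.
Proof. by elim: n => [|n IH]; rewrite ?sconst0 // !mulrSr sconstD IH sconst1. Qed.
Lemma sconstX (a : K) k : sconst (a ^+ k) = sconst a ^+ k.
Proof. by elim: k => [|k IH]; rewrite ?expr0 ?sconst1 // !exprS sconstM IH. Qed.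

Lemma natsE n k : (n%:R : S) k = if k is 0 then n%:R else 0.
Proof. by rewrite -sconstn sconstE. Qed.

Lemma mulXs (f : S) n : (sX * f) n = if n is n'.+1 then f n' else 0.
Proof.
rewrite mulsE; case: n => [|n]; first by rewrite big_ord1 /sX /= mul0r.
rewrite big_ord_recl big_ord_recl big1 ?addr0.
  by rewrite /sX /= mul0r mul1r add0r subSS subn0.
by move=> i _; rewrite !lift0 /sX /= mul0r.
Qed.

Lemma sX0 : (sX : S) 0 = 0. Proof. by []. Qed.

Lemma mulX_agree (h1 h2 : S) n : (forall k, (k < n)%N -> h1 k = h2 k) ->
  (sX * h1) n = (sX * h2) n.
Proof. by case: n => [|n] H; rewrite !mulXs // H. Qed.

Definition stail (f : S) : S := fun n => f n.+1.
Lemma ser_split (f : S) : f = sconst (f 0%N) + sX * stail f.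
Proof. by apply: ser_ext => -[|n]; rewrite addsE mulXs sconstE ?addr0 ?add0r. Qed.

Lemma mul0E (f g : S) : (f * g) 0%N = f 0%N * g 0%N.
Proof. by rewrite mulsE big_ord1 subn0. Qed.
Lemma exp0E (f : S) k : (f ^+ k) 0%N = f 0%N ^+ k.
Proof. by elim: k => [|k IH]; rewrite ?expr0 // !exprS mul0E IH. Qed.

Lemma size_sinv_seq (f : S) n : size (sinv_seq f n) = n.+1.
Proof. by elim: n => [|n IH] //=; rewrite size_rcons IH. Qed.

Lemma nth_sinv_seq (f : S) n m i : (i <= n)%N -> (n <= m)%N ->
  nth 0 (sinv_seq f m) i = nth 0 (sinv_seq f n) i.
Proof.
move=> Hi; elim: m => [|m IH]; first by rewrite leqn0 => /eqP ->.
rewrite leq_eqVlt => /orP [/eqP -> // | ]; rewrite ltnS => Hnm.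
by rewrite /= nth_rcons size_sinv_seq -IH // ifT // ltnS (leq_trans Hi).
Qed.

Lemma sinv0 (f : S) : sinv f 0%N = (f 0%N)^-1. Proof. by []. Qed.

Lemma sinvS (f : S) n : sinv f n.+1 =
  - (f 0%N)^-1 * \sum_(i < n.+1) f i.+1 * sinv f (n - i)%N.
Proof.
rewrite /sinv /= nth_rcons size_sinv_seq ltnn eqxx; congr (_ * _).
apply: eq_bigr => i _; congr (_ * _).
by rewrite (nth_sinv_seq _ (n := (n - i)%N)) // leq_subr.
Qed.

Lemma sinvK (f : S) : f 0%N != 0 -> f * sinv f = 1.
Proof.
move=> Hf; apply: ser_ext => -[|n]; first by rewrite mul0E sinv0 divff.
rewrite mulsE big_ord_recl /= subn0 sinvS mulrA mulrN mulfV // mulN1r.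
under eq_bigr => i _ do rewrite /= /bump leq0n add1n subSS.
by rewrite addNr.
Qed.

Lemma sinv_uniq (f g : S) : f * g = 1 -> g = sinv f.
Proof.
move=> H; have Hf : f 0%N != 0.
  apply/negP => /eqP H0; move: (congr1 (fun h => h 0%N) H).
  by rewrite mul0E H0 mul0r /= => /eqP; rewrite eq_sym oner_eq0.
by rewrite -[g]mul1r -(sinvK Hf) [f * _]mulrC -mulrA H mulr1.
Qed.

(* Triangular uniqueness: in dl * U = e * G, the coefficient of order n on the
   left is dl_n U_0 plus lower terms, while on the right it only involves
   G_{n-1}; so dl = 0 as soon as G vanishes to the order at which dl does. *)
Lemma ser_eq0_triangular (dl U G : S) : U 0%N != 0 -> dl * U = sX * G ->
  (forall n, (forall k, (k <= n)%N -> dl k = 0) -> G n = 0) -> dl = 0.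
Proof.
move=> HU HE HG; apply: ser_ext => n; rewrite zerosE.
elim/ltn_ind: n => n IH.
have lhsE : (dl * U) n = dl n * U 0%N.
  rewrite mulsE big_ord_recr /= subnn big1 ?add0r // => i _.
  by rewrite IH ?mul0r.
have rhsE : (sX * G) n = 0.
  rewrite mulXs; case: n IH {lhsE} => [|n] IH //; apply: HG => k Hk.
  by apply: IH; rewrite ltnS.
have : dl n * U 0%N = 0 by rewrite -lhsE HE rhsE.
by move/eqP; rewrite mulf_eq0 (negbTE HU) orbF => /eqP.
Qed.

End SeriesCoefficients.

Section Derivation.
Variable R : comNzRingType.
Variable d : R -> R.
Hypothesis dD : forall a b, d (a + b) = d a + d b.
Hypothesis dM : forall a b, d (a * b) = d a * b + a * d b.

Lemma der0 : d 0 = 0.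
Proof.
by have := dD 0 0; rewrite addr0 => /eqP; rewrite -subr_eq subrr eq_sym => /eqP.
Qed.
Lemma derN a : d (- a) = - d a.
Proof. by apply/eqP; rewrite -subr_eq0 opprK -dD addNr der0. Qed.
Lemma derB a b : d (a - b) = d a - d b.
Proof. by rewrite dD derN. Qed.
Lemma der1 : d 1 = 0.
Proof.
by have := dM 1 1; rewrite !mulr1 mul1r => /eqP; rewrite -subr_eq subrr eq_sym => /eqP.
Qed.
Lemma dern n : d n%:R = 0.
Proof. by elim: n => [|n IH]; rewrite ?der0 // mulrSr dD IH der1 addr0. Qed.
Lemma derX a k : d (a ^+ k.+1) = a ^+ k * d a *+ k.+1.
Proof.
elim: k => [|k IH]; first by rewrite expr1 expr0 mul1r.
rewrite exprS dM IH -mulrnAr mulrA -exprS [in RHS]mulrS mulrnAr.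
by rewrite [d a * _]mulrC.
Qed.
Lemma der_sum (I : Type) (r : seq I) (P : pred I) (F : I -> R) :
  d (\sum_(i <- r | P i) F i) = \sum_(i <- r | P i) d (F i).
Proof. exact: (big_morph d dD der0). Qed.
Lemma der_inv a b : a * b = 1 -> d b = - b ^+ 2 * d a.
Proof.
move=> H; have H1 := dM a b; rewrite H der1 in H1.
have -> : d b = (a * b) * d b by rewrite H mul1r.
have H2 : b * (d a * b + a * d b) = 0 by rewrite -H1 mulr0.
by apply/eqP; rewrite -subr_eq0 -H2; apply/eqP; ring.
Qed.
End Derivation.

Section SeriesDerivation.
Variable K : fieldType.
Local Notation S := (ser K).
Variable d : K -> K.
Hypothesis dD : forall a b, d (a + b) = d a + d b.
Hypothesis dM : forall a b, d (a * b) = d a * b + a * d b.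

Lemma smapD (f g : S) : smap d (f + g) = smap d f + smap d g.
Proof. by apply: ser_ext => n; rewrite /smap !addsE dD. Qed.
Lemma smapM (f g : S) : smap d (f * g) = smap d f * g + f * smap d g.
Proof.
apply: ser_ext => n; rewrite /smap addsE !mulsE (der_sum dD) -big_split /=.
by apply: eq_bigr => i _; rewrite dM.
Qed.
Lemma smapC (a : K) : smap d (sconst a) = sconst (d a).
Proof. by apply: ser_ext => -[|n]; rewrite /smap !sconstE ?(der0 dD). Qed.
Lemma smapX : smap d (sX : S) = 0.
Proof.
apply: ser_ext => n; rewrite /smap /sX zerosE.
by case: (n == 1%N); [exact: (der1 dM) | exact: (der0 dD)].
Qed.
End SeriesDerivation.

(* The Euler operator eta d/deta (up to sign): the n-th coefficient is
   multiplied by n.  It is a derivation of ser K. *)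
Section Euler.
Variable K : fieldType.
Local Notation S := (ser K).
Definition theta (f : S) : S := fun n => n%:R * f n.
Lemma thetaM (f g : S) : theta (f * g) = theta f * g + f * theta g.
Proof.
apply: ser_ext => n; rewrite /theta addsE !mulsE big_distrr -big_split /=.
apply: eq_bigr => i _; have Hi : (i <= n)%N by rewrite -ltnS.
have -> : (n%:R : K) = i%:R + (n - i)%:R by rewrite -natrD subnKC.
ring.
Qed.
End Euler.

(* The re-expansion sg : F(c) |-> F(c - e) = \sum_j (-e)^j/j! dc^j F, in
   characteristic 0.  It is a ring morphism (Leibniz rule for the Taylor
   series), hence commutes with inverses. *)
Section Shift.
Variable K : fieldType.
Hypothesis charK0 : [pchar K] =i pred0.
Local Notation S := (ser K).
Variable dc : K -> K.
Hypothesis dcD : forall a b, dc (a + b) = dc a + dc b.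
Hypothesis dcM : forall a b, dc (a * b) = dc a * b + a * dc b.

Lemma natrS_neq0 n : (n.+1%:R : K) != 0.
Proof. by have /pcharf0P -> := charK0. Qed.
Lemma fact_neq0 n : ((n`!)%:R : K) != 0.
Proof. by have /pcharf0P -> := charK0; rewrite -lt0n fact_gt0. Qed.

Definition taylor_weight (j : nat) : K := (-1) ^+ j / (j`!)%:R.
Local Notation w := taylor_weight.

Lemma taylor_weight0 : w 0 = 1. Proof. by rewrite /w expr0 fact0 divr1. Qed.
Lemma taylor_weightS n : n.+1%:R * w n.+1 = - w n.
Proof.
rewrite /w factS natrM exprS.
have H1 := natrS_neq0 n; have H2 := fact_neq0 n.
by field; rewrite H2 [1 + _]addrC natr1 H1.
Qed.

Lemma iter_dc0 j : iter j dc 0 = 0.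
Proof. by elim: j => [|j IH] //=; rewrite IH (der0 dcD). Qed.
Lemma iter_dcD j a b : iter j dc (a + b) = iter j dc a + iter j dc b.
Proof. by elim: j => [|j IH] //=; rewrite IH dcD. Qed.

Local Notation sg := (cshift dc).

Lemma cshiftE (f : S) n : sg f n = \sum_(j < n.+1) w j * iter j dc (f (n - j)%N).
Proof. by []. Qed.

Lemma cshiftD (f g : S) : sg (f + g) = sg f + sg g.
Proof.
apply: ser_ext => n; rewrite addsE !cshiftE -big_split /=.
by apply: eq_bigr => j _; rewrite addsE iter_dcD mulrDr.
Qed.
Lemma cshift0 : sg 0 = 0.
Proof.
by apply: ser_ext => n; rewrite cshiftE zerosE big1 // => j _; rewrite zerosE iter_dc0 mulr0.
Qed.
Lemma cshiftN (f : S) : sg (- f) = - sg f.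
Proof. by apply/eqP; rewrite -subr_eq0 opprK -cshiftD addNr cshift0. Qed.
Lemma cshiftB (f g : S) : sg (f - g) = sg f - sg g.
Proof. by rewrite cshiftD cshiftN. Qed.

Lemma cshiftX (f : S) : sg (sX * f) = sX * sg f.
Proof.
apply: ser_ext => -[|n]; first by rewrite cshiftE big_ord1 subnn !mulXs /= mulr0.
rewrite cshiftE big_ord_recr /= subnn mulXs iter_dc0 (der0 dcD) mulr0 addr0.
rewrite mulXs cshiftE; apply: eq_bigr => j _.
by rewrite subSn ?mulXs // -ltnS.
Qed.

Definition taylor (a : K) : S := sg (sconst a).

Lemma taylorE a n : taylor a n = w n * iter n dc a.
Proof.
rewrite /taylor cshiftE big_ord_recr /= subnn big1 ?add0r // => j _.
by rewrite -(subnSK (ltn_ord j)) sconstE iter_dc0 mulr0.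
Qed.

Lemma theta_taylor a : theta (taylor a) = - (sX * taylor (dc a)).
Proof.
apply: ser_ext => -[|n]; rewrite /theta oppsE mulXs; first by rewrite mul0r oppr0.
by rewrite !taylorE mulrA taylor_weightS /= -iterSr mulNr.
Qed.

Lemma taylorD a b : taylor (a + b) = taylor a + taylor b.
Proof. by rewrite /taylor sconstD cshiftD. Qed.

(* Leibniz formula: the Taylor series of a product is the product of the
   Taylor series; proved coefficientwise by induction using theta. *)
Lemma taylorM a b : taylor (a * b) = taylor a * taylor b.
Proof.
apply: ser_ext => j; elim: j a b => [|j IH] a b.
  by rewrite mul0E !taylorE taylor_weight0 !mul1r.
apply: (mulfI (natrS_neq0 j)).
have thetaE (f : S) : j.+1%:R * f j.+1 = theta f j.+1 by [].
rewrite !thetaE thetaM !theta_taylor dcM taylorD.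
have -> : - (sX * taylor (dc a)) * taylor b + taylor a * - (sX * taylor (dc b))
  = - (sX * (taylor (dc a) * taylor b + taylor a * taylor (dc b))) by ring.
by rewrite !oppsE !mulXs !addsE !IH.
Qed.

(* sg is multiplicative: split both factors into leading term plus e times a
   tail, and use strong induction on the order of the coefficient. *)
Lemma cshiftM (f g : S) : sg (f * g) = sg f * sg g.
Proof.
apply: ser_ext => n; elim/ltn_ind: n f g => n IH f g.
rewrite (ser_split f) (ser_split g).
move: (f 0%N) (g 0%N) (stail f) (stail g) => a b F G.
have -> : (sconst a + sX * F) * (sconst b + sX * G)
  = sconst (a * b) + sX * (F * sconst b + sconst a * G) + sX * (sX * (F * G)).
  by rewrite sconstM; ring.
rewrite !cshiftD !cshiftX.
have -> : (sg (sconst a) + sX * sg F) * (sg (sconst b) + sX * sg G)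
  = sg (sconst a) * sg (sconst b) + sX * (sg F * sg (sconst b) + sg (sconst a) * sg G)
    + sX * (sX * (sg F * sg G)) by ring.
rewrite !addsE; congr (_ + _ + _).
- exact: (congr1 (fun f => f n) (taylorM a b)).
- by apply: mulX_agree => k Hk; rewrite cshiftD !addsE !IH.
- apply: mulX_agree => k Hk; apply: mulX_agree => k' Hk'.
  by rewrite IH // (ltn_trans Hk').
Qed.

Lemma cshift_const (a : K) : dc a = 0 -> sg (sconst a) = sconst a.
Proof.
move=> H; apply: ser_ext => n; rewrite -/(taylor a) taylorE.
case: n => [|n]; first by rewrite taylor_weight0 mul1r.
by rewrite iterSr H iter_dc0 mulr0.
Qed.

Lemma cshift1 : sg 1 = 1.
Proof. exact: cshift_const (der1 dcM). Qed.

Lemma cshift_c (c : K) : dc c = 1 -> sg (sconst c) = sconst c - sX.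
Proof.
move=> H; apply: ser_ext => n; rewrite -/(taylor c) taylorE subsE.
case: n => [|[|n]]; first by rewrite taylor_weight0 mul1r /sX /= subr0.
  by rewrite /= H /taylor_weight expr1 divr1 mulr1 /sX /= sub0r.
by rewrite !iterSr H (der1 dcM) iter_dc0 mulr0 /sX /= subr0.
Qed.

Lemma cshiftXn (f : S) k : sg (f ^+ k) = sg f ^+ k.
Proof. by elim: k => [|k IH]; rewrite ?expr0 ?cshift1 // !exprS cshiftM IH. Qed.

Lemma cshift_sinv (f : S) : f 0%N != 0 -> sg (sinv f) = sinv (sg f).
Proof. by move=> Hf; apply: sinv_uniq; rewrite -cshiftM sinvK // cshift1. Qed.

Lemma cshift_lead (f : S) : sg f 0%N = f 0%N.
Proof. by rewrite cshiftE big_ord1 subn0 /= taylor_weight0 mul1r. Qed.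

Section CommutingDerivation.
Variable d : K -> K.
Hypothesis dD : forall a b, d (a + b) = d a + d b.
Hypothesis dM : forall a b, d (a * b) = d a * b + a * d b.
Hypothesis d_dc : forall a, d (dc a) = dc (d a).

Lemma der_taylor_weight j : d (w j) = 0.
Proof.
rewrite /w dM; have -> : d ((-1) ^+ j) = 0.
  elim: j => [|j IH]; first by rewrite expr0 (der1 dM).
  by rewrite exprS dM IH mulr0 (derN dD) (der1 dM) oppr0 mul0r add0r.
rewrite mul0r add0r (@der_inv _ d dM ((j`!)%:R)) ?(dern dD dM) ?mulr0 //.
by rewrite divff // fact_neq0.
Qed.

Lemma cshift_smap (f : S) : sg (smap d f) = smap d (sg f).
Proof.
have iter_d j a : d (iter j dc a) = iter j dc (d a).
  by elim: j => [|j IH] //=; rewrite d_dc IH.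
apply: ser_ext => n; rewrite /smap !cshiftE (der_sum dD); apply: eq_bigr => j _.
by rewrite dM der_taylor_weight mul0r add0r iter_d.
Qed.
End CommutingDerivation.

End Shift.

Section Identities.
Variable R : comNzRingType.

(* With D = nu - lam^2 - tau, T = 2 tau, and iD = 1/D, the t-derivative of
   Lam = - lam + (C - q)/D computed from (H_II) equals lam^2 - nu - Lam^2. *)
Lemma backlund_lambda_identity (lam nu T tau C q iD : R) :
  T = tau + tau -> (nu - lam ^+ 2 - tau) * iD = 1 ->
  - nu + (C - q) * (- (iD ^+ 2) * (2%:R * lam ^+ 3 + T * lam + C - 2%:R * lam * nu - q))
  = lam ^+ 2 - nu - (- lam + (C - q) * iD) ^+ 2.
Proof.
move=> -> /eqP; rewrite -subr_eq0 => /eqP HD.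
apply/eqP; rewrite -subr_eq0; apply/eqP.
rewrite -[RHS](mulr0 (- 2%:R * lam * q * iD + 2%:R * lam * C * iD)) -HD; ring.
Qed.

(* ... and the t-derivative of lam^2 - nu - Lam^2 is that of (H_II) with the
   parameter C - 2 q. *)
Lemma backlund_nu_identity (lam nu T tau C e q iD : R) :
  T = tau + tau -> e = q + q -> (nu - lam ^+ 2 - tau) * iD = 1 ->
  let Lam := - lam + (C - q) * iD in
  2%:R * lam * nu - (2%:R * lam ^+ 3 + T * lam + C)
    - 2%:R * Lam * (lam ^+ 2 - nu - Lam ^+ 2)
  = 2%:R * Lam ^+ 3 + T * Lam + (C - e).
Proof.
move=> -> -> /eqP; rewrite -subr_eq0 => /eqP HD Lam; rewrite /Lam.
apply/eqP; rewrite -subr_eq0; apply/eqP.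
rewrite -[RHS](mulr0 (- 2%:R * q + 2%:R * C)) -HD; ring.
Qed.

(* The potential of the Riccati equation:
   X^4 + T X^2 + 2 C X + N^2 - (L^4 + T L^2 + 2 C L) - e N w + 3 q^2 w^2,
   where w stands for 1/(X - L) and q for e/2. *)
Definition Qform (X T e q C L N w : R) :=
  X ^+ 4 + T * X ^+ 2 + 2%:R * C * X + N ^+ 2 - (L ^+ 4 + T * L ^+ 2 + 2%:R * C * L)
  - e * (N * w) + 3%:R * q ^+ 2 * w ^+ 2.

(* Let s solve the Riccati equation s^2 + e s' = Q with
   potential Q = Qform(C, lam, nu, u) (hypotheses Hs and its derivative Hds,
   where ds, dds stand for s', s''), let G = X^2 - lam^2 + nu - q u - s and
   a = s - q (u + v).  Then, writing the derivatives G', G'' out,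
     G (a^2 + e a' - Qt) + 2 e a G' + e^2 G'' = 0
   with Qt the potential for (C - e, Lam, nut, v).  Here X = y + lam,
   Lam = X - z, and C = q + D (y + 2 lam - z) encodes the Baecklund formula. *)
Lemma gauge_identity (X y lam nu D tau T e q C z Lam nut s ds dds u v : R) :
  X = y + lam -> nu = D + lam ^+ 2 + tau -> T = tau + tau -> e = q + q ->
  C = q + D * (y + 2%:R * lam - z) -> Lam = y + lam - z ->
  nut = lam ^+ 2 - nu - Lam ^+ 2 ->
  s ^+ 2 + e * ds = Qform X T e q C lam nu u ->
  s * ds + q * dds
    = 2%:R * X ^+ 3 + T * X + C + q * nu * u ^+ 2 - 3%:R * q ^+ 2 * u ^+ 3 ->
  (X - lam) * u = 1 -> (X - Lam) * v = 1 ->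
  let a := s - q * (u + v) in
  (X ^+ 2 - lam ^+ 2 + nu - q * u - s) *
    (a ^+ 2 + e * (ds + q * (u ^+ 2 + v ^+ 2)) - Qform X T e q (C - e) Lam nut v)
  + 2%:R * e * a * (2%:R * X + q * u ^+ 2 - ds)
  + e ^+ 2 * (2%:R - 2%:R * q * u ^+ 3 - dds) = 0.
Proof.
move=> -> -> -> -> -> -> -> Hs Hds u_inv v_inv a; rewrite /a; rewrite /Qform in Hs *.
move/eqP: Hs; rewrite -subr_eq0 => /eqP H1.
move/eqP: Hds; rewrite -subr_eq0 => /eqP H2.
move/eqP: u_inv; rewrite -subr_eq0 => /eqP H3.
move/eqP: v_inv; rewrite -subr_eq0 => /eqP H4.
match goal with H1 : ?r1 = 0, H2 : ?r2 = 0, H3 : ?r3 = 0, H4 : ?r4 = 0 |- _ =>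
  transitivity (
 (- s + 2%:R * q * v + q * u + tau + D + lam ^+ 2 + 2%:R * y * lam + y ^+ 2) * r1
 + (- 4%:R * q) * r2
 + (- 4%:R * q ^+ 2 * z * v - 4%:R * D * q * z - 4%:R * lam * q * s
    + 8%:R * lam * q ^+ 2 * v + 12%:R * lam * q ^+ 2 * u + 4%:R * lam * tau * q
    + 4%:R * lam * D * q + 4%:R * lam ^+ 3 * q - 2%:R * y * q * s
    + 4%:R * y * q ^+ 2 * v + 6%:R * y * q ^+ 2 * u + 2%:R * y * tau * q
    + 2%:R * y * D * q + 10%:R * y * lam ^+ 2 * q + 8%:R * y ^+ 2 * lam * q
    + 2%:R * y ^+ 3 * q) * r3
 + (2%:R * q * z * s - 4%:R * q ^+ 2 + 2%:R * q ^+ 2 * z * u - 2%:R * tau * q * z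
    - 2%:R * D * q * z - 4%:R * lam * q * s - 4%:R * lam * q ^+ 2 * u
    + 4%:R * lam * tau * q + 4%:R * lam * D * q - 2%:R * lam ^+ 2 * q * z
    + 4%:R * lam ^+ 3 * q - 4%:R * y * q * s + 4%:R * y * tau * q
    - 4%:R * y * lam * q * z + 12%:R * y * lam ^+ 2 * q - 2%:R * y ^+ 2 * q * z
    + 12%:R * y ^+ 2 * lam * q + 4%:R * y ^+ 3 * q) * r4) end.
  ring.
by rewrite H1 H2 H3 H4 !mulr0 !addr0.
Qed.

End Identities.

Section PainleveII.
Variable K : fieldType.
Hypothesis charK0 : [pchar K] =i pred0.
Variables dx dt dc : K -> K.
Hypothesis dxD : forall a b, dx (a + b) = dx a + dx b.
Hypothesis dtD : forall a b, dt (a + b) = dt a + dt b.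
Hypothesis dcD : forall a b, dc (a + b) = dc a + dc b.
Hypothesis dxM : forall a b, dx (a * b) = dx a * b + a * dx b.
Hypothesis dtM : forall a b, dt (a * b) = dt a * b + a * dt b.
Hypothesis dcM : forall a b, dc (a * b) = dc a * b + a * dc b.
Hypothesis dxt_comm : forall a, dx (dt a) = dt (dx a).
Hypothesis dxc_comm : forall a, dx (dc a) = dc (dx a).
Hypothesis dtc_comm : forall a, dt (dc a) = dc (dt a).
Variables x t c : K.
Hypotheses (dx_x : dx x = 1) (dc_x : dc x = 0).
Hypotheses (dx_t : dx t = 0) (dt_t : dt t = 1) (dc_t : dc t = 0).
Hypotheses (dx_c : dx c = 0) (dt_c : dt c = 0) (dc_c : dc c = 1).
Hypothesis c_neq0 : c != 0.
Variable lam0 : K.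
Hypothesis cubic : 2%:R * lam0 ^+ 3 + t * lam0 + c = 0.

Local Notation hf := (@Defs.half K).

Lemma two_neq0 : (2%:R : K) != 0. Proof. exact: (natrS_neq0 charK0 1). Qed.
Lemma half2 : hf + hf = 1.
Proof. by move: two_neq0; rewrite /Defs.half => H; field. Qed.

Lemma der_half (d : K -> K) : (forall a b, d (a + b) = d a + d b) ->
  (forall a b, d (a * b) = d a * b + a * d b) -> d hf = 0.
Proof.
move=> dD dM; rewrite (@der_inv _ d dM (2%:R) hf) ?(dern dD dM) ?mulr0 //.
by rewrite /Defs.half mulfV // two_neq0.
Qed.

(* Facts on the root lam0 of 2 l^3 + t l + c: differentiating the cubic
   shows that it is a simple root, independent of x. *)
Lemma cubic_der (d : K -> K) : (forall a b, d (a + b) = d a + d b) ->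
  (forall a b, d (a * b) = d a * b + a * d b) ->
  (6%:R * lam0 ^+ 2 + t) * d lam0 + d t * lam0 + d c = 0.
Proof.
move=> dD dM; have := congr1 d cubic.
by rewrite !dD !dM (dern dD dM) (der0 dD) => <-; ring.
Qed.

Lemma cubic_simple : 6%:R * lam0 ^+ 2 + t != 0.
Proof.
apply/negP => /eqP H; have := cubic_der dtD dtM; rewrite H mul0r add0r dt_t dt_c.
rewrite mul1r addr0 => HL; move: H; rewrite HL expr0n /= mulr0 add0r => Ht.
by move: dt_t; rewrite Ht (der0 dtD) => /eqP; rewrite eq_sym oner_eq0.
Qed.

Lemma dx_lam0 : dx lam0 = 0.
Proof.
have := cubic_der dxD dxM; rewrite dx_t dx_c mul0r !addr0 => /eqP.
by rewrite mulf_eq0 (negbTE cubic_simple) /= => /eqP.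
Qed.

Lemma cubic_c : c = - (2%:R * lam0 ^+ 3 + t * lam0).
Proof. by apply/eqP; rewrite -addr_eq0 addrC cubic. Qed.

(* Since c != 0, the leading coefficient of nu - lam^2 - t/2 (the denominator
   of the Baecklund transformation) does not vanish. *)
Lemma backlund_denominator_lead : lam0 ^+ 2 + hf * t != 0.
Proof.
apply/negP => /eqP H.
have Ht : t = - (2%:R * lam0 ^+ 2).
  have Hh : hf * t = - lam0 ^+ 2 by apply/eqP; rewrite -addr_eq0 addrC H.
  transitivity ((hf + hf) * t); first by rewrite half2 mul1r.
  by rewrite mulrDl Hh; ring.
by move: c_neq0; rewrite cubic_c Ht; apply/negP; rewrite negbK; apply/eqP; ring.
Qed.

Lemma x_lam0_neq0 : x - lam0 != 0.
Proof.
apply/negP => /eqP /(congr1 dx); rewrite (derB dxD) dx_x dx_lam0 subr0 (der0 dxD).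
by move/eqP; rewrite oner_eq0.
Qed.

Lemma Q0_factor_neq0 : x ^+ 2 + 2%:R * lam0 * x + 3%:R * lam0 ^+ 2 + t != 0.
Proof.
apply/negP => /eqP H.
have H1 : dx (x ^+ 2 + 2%:R * lam0 * x + 3%:R * lam0 ^+ 2 + t) = 2%:R * x + 2%:R * lam0.
  by rewrite !dxD !dxM ?dx_x ?dx_lam0 ?dx_t ?(dern dxD dxM); ring.
have H2 : dx (2%:R * x + 2%:R * lam0) = 2%:R.
  by rewrite !dxD !dxM ?dx_x ?dx_lam0 ?(dern dxD dxM); ring.
move: H1; rewrite H (der0 dxD) => H1.
by move: H2; rewrite -H1 (der0 dxD) => /eqP; rewrite eq_sym (negbTE two_neq0).
Qed.

Local Notation S := (ser K).
Local Notation e := (@sX K).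
Local Notation X := (sconst x).
Local Notation T := (sconst t).
Local Notation Cs := (sconst c).
Local Notation hh := (sconst hf).
Local Notation Dx := (smap dx).
Local Notation Dt := (smap dt).

Lemma DxD (f g : S) : Dx (f + g) = Dx f + Dx g. Proof. exact: smapD. Qed.
Lemma DxM (f g : S) : Dx (f * g) = Dx f * g + f * Dx g. Proof. exact: smapM. Qed.
Lemma DtD (f g : S) : Dt (f + g) = Dt f + Dt g. Proof. exact: smapD. Qed.
Lemma DtM (f g : S) : Dt (f * g) = Dt f * g + f * Dt g. Proof. exact: smapM. Qed.
Lemma DxB (f g : S) : Dx (f - g) = Dx f - Dx g. Proof. exact: (derB DxD). Qed.
Lemma DtB (f g : S) : Dt (f - g) = Dt f - Dt g. Proof. exact: (derB DtD). Qed.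
Lemma DxN (f : S) : Dx (- f) = - Dx f. Proof. exact: (derN DxD). Qed.
Lemma DtN (f : S) : Dt (- f) = - Dt f. Proof. exact: (derN DtD). Qed.
Lemma DxX2 (f : S) : Dx (f ^+ 2) = 2%:R * f * Dx f.
Proof. by rewrite (derX DxM) expr1 -mulr_natl mulrA. Qed.
Lemma DtX2 (f : S) : Dt (f ^+ 2) = 2%:R * f * Dt f.
Proof. by rewrite (derX DtM) expr1 -mulr_natl mulrA. Qed.
Lemma DxC a : Dx (sconst a) = sconst (dx a). Proof. exact: smapC. Qed.
Lemma DtC a : Dt (sconst a) = sconst (dt a). Proof. exact: smapC. Qed.
Lemma DxX : Dx e = 0. Proof. exact: smapX. Qed.
Lemma DtX : Dt e = 0. Proof. exact: smapX. Qed.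
Lemma Dxt (f : S) : Dx (Dt f) = Dt (Dx f).
Proof. by apply: ser_ext => n; rewrite /smap dxt_comm. Qed.

(* Both dl = Dx lam and dl = sg lam - Lam are forced to vanish by an
   equation dl * U = e^2 Dt^2 dl, with U invertible. *)
Lemma eq0_by_second_order (dl U : S) : U 0%N != 0 ->
  dl * U = e * (e * Dt (Dt dl)) -> dl = 0.
Proof.
move=> HU HE; apply: (ser_eq0_triangular HU HE) => -[|n] Hn; rewrite mulXs //.
by rewrite /smap Hn // !(der0 dtD).
Qed.

(* (lam, nu) is the 0-parameter solution of (H_II). *)
Variables lam nu : S.
Hypothesis lam_lead : lam 0%N = lam0.
Hypothesis nu_lead : nu 0%N = 0.
Hypothesis H2_lam : smul sX (smap dt lam) = nu.
Hypothesis H2_nu : smul sX (smap dt nu)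
           = sadd (smul (sconst 2%:R) (spow lam 3))
                  (sadd (smul (sconst t) lam) (sconst c)).

Lemma HII_lam : e * Dt lam = nu. Proof. exact: H2_lam. Qed.
Lemma HII_nu : e * Dt nu = 2%:R * lam ^+ 3 + T * lam + Cs.
Proof. by move: H2_nu; rewrite saddE !smulE spowE sconstn addrA. Qed.

(* The 0-parameter solution does not depend on x: differentiating (H_II)
   in x gives Dx lam * (6 lam^2 + t) = e^2 Dt^2 (Dx lam). *)
Lemma Dx_lam : Dx lam = 0.
Proof.
set dl := Dx lam.
have Hnu : Dx nu = e * Dt dl by rewrite -HII_lam DxM DxX mul0r add0r Dxt.
apply: (@eq0_by_second_order _ (6%:R * lam ^+ 2 + T)).
  by rewrite addsE mul0E exp0E natsE lam_lead sconstE; exact: cubic_simple.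
have := congr1 Dx HII_nu; rewrite DxM DxX mul0r add0r Dxt Hnu DtM DtX mul0r add0r.
by rewrite !DxD !DxM (dern DxD DxM) !DxC dx_t dx_c sconst0 -/dl => ->; ring.
Qed.

Lemma Dx_nu : Dx nu = 0.
Proof. by rewrite -HII_lam DxM DxX mul0r add0r Dxt Dx_lam (der0 DtD) mulr0. Qed.

Local Notation tau := (sconst (hf * t)).
Local Notation q := (e * hh).
Local Notation Dd := (nu - lam ^+ 2 - tau).
Local Notation iD := (sinv Dd).
Local Notation al := (Cs - q).
Local Notation Lam := (- lam + al * iD).
Local Notation nut := (lam ^+ 2 - nu - Lam ^+ 2).

Lemma T_half : T = tau + tau.
Proof. by rewrite -sconstD -mulrDl half2 mul1r. Qed.
Lemma e_half : e = q + q.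
Proof. by rewrite -mulrDr -sconstD half2 sconst1 mulr1. Qed.

Lemma Dd_lead : Dd 0%N != 0.
Proof.
rewrite !subsE exp0E nu_lead lam_lead sconstE sub0r -opprD oppr_eq0.
exact: backlund_denominator_lead.
Qed.
Lemma Dd_inv : Dd * iD = 1. Proof. exact: sinvK Dd_lead. Qed.

Lemma Dt_al : Dt al = 0.
Proof.
by rewrite DtB DtM DtX !DtC dt_c (der_half dtD dtM) sconst0 mul0r mulr0 addr0 subr0.
Qed.

Lemma Dt_Dd : e * Dt Dd = 2%:R * lam ^+ 3 + T * lam + Cs - 2%:R * lam * nu - q.
Proof.
transitivity (e * Dt nu - 2%:R * lam * (e * Dt lam) - q); last by rewrite HII_nu HII_lam.
rewrite !DtB DtX2 DtC dtM (der_half dtD dtM) dt_t mul0r add0r mulr1; ring.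
Qed.

Lemma backlund_lam : e * Dt Lam = nut.
Proof.
transitivity (- (e * Dt lam) + al * (- (iD ^+ 2) * (e * Dt Dd))).
  rewrite [in LHS]DtD [in LHS]DtN [in LHS]DtM Dt_al mul0r add0r.
  by rewrite (der_inv DtM Dd_inv); ring.
by rewrite HII_lam Dt_Dd; apply: backlund_lambda_identity; [exact: T_half | exact: Dd_inv].
Qed.

Lemma backlund_nu : e * Dt nut = 2%:R * Lam ^+ 3 + T * Lam + (Cs - e).
Proof.
transitivity (2%:R * lam * (e * Dt lam) - e * Dt nu - 2%:R * Lam * (e * Dt Lam)).
  by rewrite !DtB !DtX2; ring.
rewrite HII_lam HII_nu backlund_lam.
by apply: backlund_nu_identity; [exact: T_half | exact: e_half | exact: Dd_inv].
Qed.

Lemma Lam_lead : Lam 0%N = lam0.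
Proof.
rewrite addsE oppsE lam_lead mul0E sinv0 subsE mul0E sconstE sX0 mul0r subr0.
rewrite !subsE exp0E nu_lead lam_lead sconstE sub0r -opprD.
have Hc : c = 2%:R * lam0 * - (lam0 ^+ 2 + hf * t).
  rewrite cubic_c.
  transitivity (- (2%:R * lam0 ^+ 3 + (hf + hf) * t * lam0)); last by ring.
  by rewrite half2 mul1r.
by rewrite Hc mulfK ?oppr_eq0 ?backlund_denominator_lead //; ring.
Qed.

Local Notation sg := (cshift dc).
Lemma sgD (f g : S) : sg (f + g) = sg f + sg g. Proof. exact: cshiftD. Qed.
Lemma sgB (f g : S) : sg (f - g) = sg f - sg g. Proof. exact: cshiftB. Qed.
Lemma sgN (f : S) : sg (- f) = - sg f. Proof. exact: cshiftN. Qed.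
Lemma sgM (f g : S) : sg (f * g) = sg f * sg g. Proof. exact: cshiftM. Qed.
Lemma sgXn (f : S) k : sg (f ^+ k) = sg f ^+ k. Proof. exact: cshiftXn. Qed.
Lemma sgXe (f : S) : sg (e * f) = e * sg f. Proof. exact: cshiftX. Qed.
Lemma sg1 : sg 1 = 1. Proof. exact: cshift1. Qed.
Lemma sge : sg e = e. Proof. by rewrite -[e]mulr1 sgXe sg1. Qed.
Lemma sgn n : sg (n%:R : S) = n%:R.
Proof. by rewrite -sconstn cshift_const // (dern dcD dcM). Qed.
Lemma sgX : sg X = X. Proof. exact: cshift_const. Qed.
Lemma sgT : sg T = T. Proof. exact: cshift_const. Qed.
Lemma sghh : sg hh = hh. Proof. exact: cshift_const (der_half dcD dcM). Qed.
Lemma sgc : sg Cs = Cs - e. Proof. exact: cshift_c. Qed.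
Lemma sgDt (f : S) : sg (Dt f) = Dt (sg f). Proof. exact: cshift_smap. Qed.
Lemma sgDx (f : S) : sg (Dx f) = Dx (sg f). Proof. exact: cshift_smap. Qed.

(* The shifted 0-parameter solution is the Baecklund transform: both solve
   (H_II) with parameter c - e, and their difference dl satisfies
   dl * (2 (sg lam^2 + sg lam Lam + Lam^2) + t) = e^2 Dt^2 dl. *)
Lemma sg_lam : sg lam = Lam.
Proof.
have E1 : e * Dt (sg lam) = sg nu by rewrite -sgDt -sgXe HII_lam.
have E2 : e * Dt (sg nu) = 2%:R * sg lam ^+ 3 + T * sg lam + (Cs - e).
  by rewrite -sgDt -sgXe HII_nu !sgD [sg (2%:R * _)]sgM [sg (T * _)]sgM sgXn sgn sgT sgc.
apply/eqP; rewrite -subr_eq0; apply/eqP.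
set dl := sg lam - Lam.
have E3 : sg nu - nut = e * Dt dl by rewrite -E1 -backlund_lam DtB; ring.
apply: (@eq0_by_second_order _ (2%:R * (sg lam ^+ 2 + sg lam * Lam + Lam ^+ 2) + T)).
  rewrite addsE mul0E natsE !addsE !exp0E mul0E cshift_lead lam_lead Lam_lead sconstE.
  have -> : 2%:R * (lam0 ^+ 2 + lam0 * lam0 + lam0 ^+ 2) + t = 6%:R * lam0 ^+ 2 + t
    by ring.
  exact: cubic_simple.
transitivity (e * Dt (sg nu) - e * Dt nut); first by rewrite E2 backlund_nu /dl; ring.
by rewrite -mulrBr -DtB E3 DtM DtX mul0r add0r.
Qed.

Lemma sg_nu : sg nu = nut.
Proof. by rewrite -[in LHS]HII_lam sgXe sgDt sg_lam backlund_lam. Qed.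

(* s = eta^{-1} S^(0) solves the Riccati equation; r is the square-root
   prefactor of f^(0) and g^(0). *)
Variable s : S.
Hypothesis s_lead : s 0%N ^+ 2
            = (x - lam0) ^+ 2 * (x ^+ 2 + 2%:R * lam0 * x + 3%:R * lam0 ^+ 2 + t).
Hypothesis riccati : sadd (spow s 2) (smul sX (smap dx s)) = QII x t c lam nu.
Variable r : S.
Hypothesis r_branch : smul (spow r 2)
                (smul (ssub (sconst x) (BLam t c lam nu)) (ssub (sconst x) lam))
              = sconst 1.

Lemma s_lead_neq0 : s 0%N != 0.
Proof.
apply/negP => /eqP H; move: s_lead; rewrite H expr0n /= => /esym/eqP.
by rewrite mulf_eq0 expf_eq0 /= (negbTE x_lam0_neq0) (negbTE Q0_factor_neq0).
Qed.

Local Notation u := (sinv (X - lam)).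
Local Notation v := (sinv (X - Lam)).
Local Notation Qf C L N w := (Qform X T e q C L N w).

Lemma x_lam_lead : (X - lam) 0%N != 0.
Proof. by rewrite subsE sconstE lam_lead x_lam0_neq0. Qed.
Lemma x_Lam_lead : (X - Lam) 0%N != 0.
Proof. by rewrite subsE sconstE Lam_lead x_lam0_neq0. Qed.
Lemma u_inv : (X - lam) * u = 1. Proof. exact: sinvK x_lam_lead. Qed.
Lemma v_inv : (X - Lam) * v = 1. Proof. exact: sinvK x_Lam_lead. Qed.

Lemma sg_u : sg u = v.
Proof. by rewrite cshift_sinv ?x_lam_lead // sgB sgX sg_lam. Qed.

Lemma DxX_x : Dx X = 1. Proof. by rewrite DxC dx_x sconst1. Qed.
Lemma Dxq : Dx q = 0.
Proof. by rewrite DxM DxX DxC (der_half dxD dxM) sconst0 mul0r mulr0 addr0. Qed.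

Lemma Dx_Lam : Dx Lam = 0.
Proof.
have Dx_Dd : Dx Dd = 0.
  rewrite !DxB DxX2 Dx_nu Dx_lam DxC dxM (der_half dxD dxM) dx_t.
  by rewrite !mul0r !mulr0 !addr0 sconst0 !subr0.
rewrite DxD DxN DxM (der_inv DxM Dd_inv) Dx_Dd Dx_lam DxB DxC dx_c sconst0 Dxq.
by rewrite subr0 !mulr0 mul0r oppr0 !addr0.
Qed.
Lemma Dx_u : Dx u = - u ^+ 2.
Proof. by rewrite (der_inv DxM u_inv) DxB DxX_x Dx_lam subr0 mulr1. Qed.
Lemma Dx_v : Dx v = - v ^+ 2.
Proof. by rewrite (der_inv DxM v_inv) DxB DxX_x Dx_Lam subr0 mulr1. Qed.

Lemma QII_Qform : QII x t c lam nu = Qf Cs lam nu u.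
Proof.
have three_quarters : sconst (3%:R / 4%:R : K) = 3%:R * hh ^+ 2.
  rewrite -sconstn -sconstX -sconstM; congr sconst.
  by move: two_neq0; rewrite /Defs.half => H; field; rewrite H (natrS_neq0 charK0 3).
rewrite /QII /Qform !saddE !smulE !soppE !ssubE !spowE three_quarters.
by rewrite ?sconstD ?sconstM ?sconstX ?sconstn; ring.
Qed.

Lemma sg_Qform C L N w : sg (Qf C L N w) = Qf (sg C) (sg L) (sg N) (sg w).
Proof. by rewrite /Qform !(sgD, sgB, sgN, sgM, sgXn, sgX, sgT, sge, sghh, sgn, sg1). Qed.

Lemma riccati_Qform : s ^+ 2 + e * Dx s = Qf Cs lam nu u.
Proof. by rewrite -QII_Qform -riccati saddE smulE spowE. Qed.

Lemma sg_riccati : sg s ^+ 2 + e * Dx (sg s) = Qf (Cs - e) Lam nut v.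
Proof. by rewrite -sgDx -sgXe -sgXn -sgD riccati_Qform sg_Qform sgc sg_lam sg_nu sg_u. Qed.

(* G = x^2 - lam^2 + nu - q u - s, so that f^(0) + g^(0) S^(0) = r G. *)
Local Notation G := (X ^+ 2 - lam ^+ 2 + nu - q * u - s).
Local Notation iG := (sinv G).

Lemma G_lead : G 0%N != 0.
Proof.
rewrite !(subsE, addsE) !exp0E sconstE nu_lead lam_lead !mul0E sX0 !mul0r subr0 addr0.
apply/negP => /eqP H.
have Hs0 : s 0%N = (x - lam0) * (x + lam0).
  by apply/eqP; rewrite eq_sym -subr_eq0 -H; apply/eqP; ring.
move: s_lead; rewrite Hs0 => /eqP; rewrite -subr_eq0.
have -> : ((x - lam0) * (x + lam0)) ^+ 2 -
    (x - lam0) ^+ 2 * (x ^+ 2 + 2%:R * lam0 * x + 3%:R * lam0 ^+ 2 + t)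
  = - ((x - lam0) ^+ 2 * (2%:R * lam0 ^+ 2 + t)) by ring.
rewrite oppr_eq0 mulf_eq0 expf_eq0 /= (negbTE x_lam0_neq0) /= => /eqP Ht.
move: c_neq0; rewrite cubic_c.
have -> : t = - (2%:R * lam0 ^+ 2) by apply/eqP; rewrite -addr_eq0 addrC Ht.
by apply/negP; rewrite negbK; apply/eqP; ring.
Qed.
Lemma G_inv : G * iG = 1. Proof. exact: sinvK G_lead. Qed.

Lemma DxG : Dx G = 2%:R * X + q * u ^+ 2 - Dx s.
Proof. by rewrite !(DxB, DxD) !DxX2 DxM Dxq Dx_u Dx_lam Dx_nu DxX_x; ring. Qed.

Lemma DxxG : Dx (Dx G) = 2%:R - 2%:R * q * u ^+ 3 - Dx (Dx s).
Proof. by rewrite DxG DxB DxD DxM (dern DxD DxM) DxX_x DxM Dxq DxX2 Dx_u; ring. Qed.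

(* The x-derivative of the Riccati equation, divided by 2. *)
Lemma riccati_der : s * Dx s + q * Dx (Dx s)
  = 2%:R * X ^+ 3 + T * X + Cs + q * nu * u ^+ 2 - 3%:R * q ^+ 2 * u ^+ 3.
Proof.
have DQ : Dx (Qf Cs lam nu u) = 4%:R * X ^+ 3 + 2%:R * T * X + 2%:R * Cs
   + e * (nu * u ^+ 2) - 6%:R * q ^+ 2 * u ^+ 3.
  rewrite /Qform !(DxD, DxB, DxN, DxM) ?(dern DxD DxM) ?(der1 DxM) DxX_x !DxC.
  by rewrite dx_t dx_c (der_half dxD dxM) sconst0 Dx_lam Dx_nu DxX Dx_u; ring.
have H1 : 2%:R * s * Dx s + e * Dx (Dx s) = Dx (Qf Cs lam nu u).
  by rewrite -riccati_Qform DxD DxX2 DxM DxX mul0r add0r.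
rewrite DQ in H1.
apply/eqP; rewrite -subr_eq0; apply/eqP.
have E : (2%:R : S) * (s * Dx s + q * Dx (Dx s)
      - (2%:R * X ^+ 3 + T * X + Cs + q * nu * u ^+ 2 - 3%:R * q ^+ 2 * u ^+ 3))
   = (2%:R * s * Dx s + e * Dx (Dx s) - (4%:R * X ^+ 3 + 2%:R * T * X + 2%:R * Cs
   + e * (nu * u ^+ 2) - 6%:R * q ^+ 2 * u ^+ 3))
   + ((q + q) - e) * (Dx (Dx s) - nu * u ^+ 2) by ring.
rewrite H1 subrr add0r -e_half subrr mul0r in E.
have Hh : hh * 2%:R = 1.
  by rewrite -sconstn -sconstM mulrC -[2%:R]/(1 + 1 : K) mulrDl mul1r half2 sconst1.
by rewrite -[LHS]mul1r -{1}Hh -[hh * 2 * _]mulrA E mulr0.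
Qed.

Local Notation a := (s - q * (u + v)).
Local Notation Qt := (Qf (Cs - e) Lam nut v).
Local Notation hat := (a + e * (Dx G * iG)).

Lemma gauge_identity_G : G * (a ^+ 2 + e * (Dx s + q * (u ^+ 2 + v ^+ 2)) - Qt)
  + 2%:R * e * a * Dx G + e ^+ 2 * Dx (Dx G) = 0.
Proof.
rewrite DxxG DxG.
apply: (@gauge_identity _ X (X - lam) lam nu Dd tau T e q Cs (X - Lam) Lam nut s
  (Dx s) (Dx (Dx s)) u v) => //; try ring.
- exact: T_half.
- exact: e_half.
- have -> : X - lam + 2%:R * lam - (X - Lam) = al * iD by ring.
  by rewrite mulrCA Dd_inv mulr1; ring.
- exact: riccati_Qform.
- exact: riccati_der.
- exact: u_inv.
- exact: v_inv.
Qed.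

(* Dividing the gauge identity by G: hat solves the shifted Riccati equation. *)
Lemma hat_riccati : hat ^+ 2 + e * Dx hat = Qt.
Proof.
have Da : Dx a = Dx s + q * (u ^+ 2 + v ^+ 2).
  by rewrite DxB DxM Dxq DxD Dx_u Dx_v; ring.
have -> : Dx hat = Dx s + q * (u ^+ 2 + v ^+ 2)
    + e * (Dx (Dx G) * iG - iG ^+ 2 * (Dx G) ^+ 2).
  by rewrite DxD Da DxM DxX mul0r add0r DxM (der_inv DxM G_inv); ring.
apply/eqP; rewrite -subr_eq0; apply/eqP.
move: gauge_identity_G G_inv; move: G iG (Dx G) (Dx (Dx G)) => g ig dG ddG HC HG.
transitivity (ig * (g * (a ^+ 2 + e * (Dx s + q * (u ^+ 2 + v ^+ 2)) - Qt)
  + 2%:R * e * a * dG + e ^+ 2 * ddG)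
  - (a ^+ 2 + e * (Dx s + q * (u ^+ 2 + v ^+ 2)) - Qt) * (g * ig - 1)); first ring.
by rewrite HC HG; ring.
Qed.

(* Two solutions of the same Riccati equation with the same (nonzero)
   leading term coincide: their difference dl satisfies
   dl * (sg s + hat) = - e Dx dl. *)
Lemma sg_s : sg s = hat.
Proof.
apply/eqP; rewrite -subr_eq0; apply/eqP.
have E : (sg s - hat) * (sg s + hat) = e * (- Dx (sg s - hat)).
  transitivity ((sg s ^+ 2 + e * Dx (sg s)) - (hat ^+ 2 + e * Dx hat)
    + e * (Dx hat - Dx (sg s))); first ring.
  by rewrite sg_riccati hat_riccati subrr add0r DxB; ring.
apply: (ser_eq0_triangular _ E).
  rewrite !addsE oppsE cshift_lead !mul0E sX0 !mul0r oppr0 !addr0 -mulr2n -mulr_natl.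
  by rewrite mulf_neq0 ?two_neq0 ?s_lead_neq0.
by move=> n Hn; rewrite oppsE /smap Hn // (der0 dxD) oppr0.
Qed.

Local Notation xLl := ((X - Lam) * (X - lam)).

Lemma r_sq : r ^+ 2 * xLl = 1.
Proof. by move: r_branch; rewrite /BLam !spowE. Qed.

Lemma r_log_der : e * Dx r * r * xLl = - (q * (u + v)).
Proof.
have Dr : 2%:R * r * Dx r * xLl + r ^+ 2 * ((X - Lam) + (X - lam)) = 0.
  have := congr1 Dx r_sq; rewrite (der1 DxM) DxM DxX2 DxM !DxB DxX_x Dx_Lam Dx_lam subr0.
  by move=> <-; ring.
apply/eqP; rewrite -subr_eq0 opprK; apply/eqP; rewrite {1}e_half.
transitivity (q * (2%:R * r * Dx r * xLl + r ^+ 2 * ((X - Lam) + (X - lam)))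
  - q * u * (r ^+ 2 * xLl - 1) - q * r ^+ 2 * (X - Lam) * (1 - (X - lam) * u)
  - q * v * (r ^+ 2 * xLl - 1) - q * r ^+ 2 * (X - lam) * (1 - (X - Lam) * v));
  first ring.
by rewrite Dr r_sq u_inv v_inv; ring.
Qed.

(* Conclusion: with F = r G, e F'/F = e r'/r + e G'/G = - q (u + v) + e G'/G
   = sg s - s, which is the theorem multiplied by e. *)
Lemma shift_log_derivative :
  let F := sadd (smul r (fcore x lam nu)) (smul (sopp r) s) in
  ssub s (cshift dc s) = sopp (smul sX (smul (smap dx F) (sinv F))).
Proof.
move=> F.
have HF : F = r * G.
  by rewrite /F /fcore !saddE !smulE !soppE !ssubE spowE sconstX; ring.
have sinvF : sinv (r * G) = r * xLl * iG.
  apply/esym/sinv_uniq.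
  by rewrite -[1]mulr1 -{1}r_sq -G_inv; ring.
rewrite ssubE soppE !smulE HF sg_s sinvF DxM; apply/esym.
transitivity (- ((e * Dx r * r * xLl) * (G * iG) + e * (Dx G * iG) * (r ^+ 2 * xLl)));
  first ring.
by rewrite r_log_der G_inv r_sq; ring.
Qed.

End PainleveII.

Theorem mainTheorem15 (K : fieldType) (charK0 : [pchar K] =i pred0)
  (dx dt dc : K -> K)
  (dxD : forall a b, dx (a + b) = dx a + dx b)
  (dtD : forall a b, dt (a + b) = dt a + dt b)
  (dcD : forall a b, dc (a + b) = dc a + dc b)
  (dxM : forall a b, dx (a * b) = dx a * b + a * dx b)
  (dtM : forall a b, dt (a * b) = dt a * b + a * dt b)
  (dcM : forall a b, dc (a * b) = dc a * b + a * dc b)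
  (dxt_comm : forall a, dx (dt a) = dt (dx a))
  (dxc_comm : forall a, dx (dc a) = dc (dx a))
  (dtc_comm : forall a, dt (dc a) = dc (dt a))
  (x t c : K)
  (dx_x : dx x = 1) (dt_x : dt x = 0) (dc_x : dc x = 0)
  (dx_t : dx t = 0) (dt_t : dt t = 1) (dc_t : dc t = 0)
  (dx_c : dx c = 0) (dt_c : dt c = 0) (dc_c : dc c = 1)
  (c_neq0 : c != 0)
  (lam0 : K) (cubic : 2%:R * lam0 ^+ 3 + t * lam0 + c = 0)
  (lam nu : ser K)
  (lam_lead : lam 0%N = lam0) (nu_lead : nu 0%N = 0)
  (H2_lam : smul sX (smap dt lam) = nu)
  (H2_nu : smul sX (smap dt nu)
           = sadd (smul (sconst 2%:R) (spow lam 3))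
                  (sadd (smul (sconst t) lam) (sconst c)))
  (s : ser K)
  (s_lead : s 0%N ^+ 2
            = (x - lam0) ^+ 2 * (x ^+ 2 + 2%:R * lam0 * x + 3%:R * lam0 ^+ 2 + t))
  (riccati : sadd (spow s 2) (smul sX (smap dx s)) = QII x t c lam nu)
  (r : ser K)
  (r_branch : smul (spow r 2)
                (smul (ssub (sconst x) (BLam t c lam nu)) (ssub (sconst x) lam))
              = sconst 1) :
  let F := sadd (smul r (fcore x lam nu)) (smul (sopp r) s) in
  ssub s (cshift dc s) = sopp (smul sX (smul (smap dx F) (sinv F))).
Proof.
exact: (shift_log_derivative charK0 dxD dtD dcD dxM dtM dcM dxt_comm dxc_comm dtc_comm
  dx_x dc_x dx_t dt_t dc_t dx_c dt_c dc_c c_neq0 cubic lam_lead nu_lead H2_lam H2_nu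
  s_lead riccati r_branch).
Qed.
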